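(* Let $\sigma$ be a sequence of transitions such that $G_\sigma$ has no negative cycle, let $H=|G_\sigma|$, and let $k\ge 1$. If there is a complete p-tree with root labelled $(x,y)$, weight $w$ and height at most $k$, then in the $2k$-fold composition $H^{\odot 2k}=H\odot\cdots\odot H$ (whose columns are $0,\dots,4k-1$, the $l$-th copy of $H$ occupying columns $2l-2$ and $2l-1$) there is a path from $(2k-1,x)$ to $(2k-1,y)$ of weight at most $w$; hence the minimal weight of such a path is at most $w$.
   Context: Fix a finite set of clocks $X=\{x_0,\dots,x_m\}$ and a finite sequence $\sigma$ of timed-automaton transitions over $X$. A weight is a pair $(\preccurlyeq,d)$ with $\preccurlyeq\in\{<,\le\}$, $d\in\mathbb{Z}$; weights are added by $(\preccurlyeq_1,d_1)+(\preccurlyeq_2,d_2)=(\preccurlyeq,d_1+d_2)$, $\preccurlyeq$ being $<$ iff one of $\preccurlyeq_1,\preccurlyeq_2$ is $<$, and totally ordered by $(\preccurlyeq,d)<(\preccurlyeq',d')$ iff $d<d'$, or $d=d'$, $\preccurlyeq$ is $<$ and $\preccurlyeq'$ is $\le$. A weight is negative if it is smaller than $(\le,0)$; the weight of a path is the sum of its edge weights. A transformation graph with $k+1$ columns is a directed graph with vertex set $\{0,\dots,k\}\times X$ with weighted edges. $G_\sigma$ is the transformation graph of $\sigma$ (the composition of the one-transition graphs encoding time elapse, guard and reset of each transition). Composition: if $G_1$ has $k_1$ columns and $G_2$ has $k_2$ columns, $G_1\odot G_2$ has vertex set $\{0,\dots,k_1+k_2-1\}\times X$, the edges of $G_1$,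 the edges of $G_2$ shifted by $k_1$ columns, and for every $x\in X$ edges $(k_1-1,x)\to(k_1,x)$ and $(k_1,x)\to(k_1-1,x)$ of weight $(\le,0)$. The canonical form of a graph $G$ without negative cycles has, for every pair of distinct vertices $u,w$ connected by a path, an edge $u\to w$ weighted by the minimal path weight. $|G|$ is the canonical form of $G$ restricted to its first and last columns, renumbered $0$ and $1$. p-trees (relative to $H=|G_\sigma|$): a p-tree is a finite rooted tree with weighted edges whose nodes are labelled by $\top$ or by pairs $(x,y)\in X\times X$; nodes labelled $\top$ are leaves. A node labelled $(x,y)$ has children of exactly one of the following forms: (a) a single child $\top$, with edge weight $e$, where $H$ has an edge $(c,x)\to(c,y)$ of weight $e$ for some $c\in\{0,1\}$; (b) a single child $(u,v)$, with edge weight $e_1+e_2$, where for some $c,c'\in\{0,1\}$ with $c\ne c'$, $H$ has edges $(c,x)\to(c',u)$ of weight $e_1$ and $(c',v)\to(c,y)$ of weight $e_2$; (c) two children $(x,z)$ and $(z,y)$ for some $z\in X$, both with edge weight $(\le,0)$. The weight of a p-tree is the sum of all its edge weights. A p-tree is complete if all its leaves are labelled $\top$. The height of a tree is the maximal number of edges on a path from the root to a leaf. *)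

From Stdlib Require Import ZArith.
From mathcomp Require Import all_boot.
Set Implicit Arguments. Unset Strict Implicit. Unset Printing Implicit Defensive.

(* ---------- Weights (≼, d) ; wstrict = true means "<", false means "≤" ---------- *)
Record weight := W { wstrict : bool; wval : Z }.

Definition w0 : weight := W false 0%Z.

Definition addw (a b : weight) : weight :=
  W (wstrict a || wstrict b) (wval a + wval b)%Z.

Definition lew (a b : weight) : Prop :=
  (wval a < wval b)%Z \/ (wval a = wval b /\ (wstrict a = true \/ wstrict b = false)).

Definition ltw (a b : weight) : Prop := ~ lew b a.

Definition negw (a : weight) : Prop := ltw a w0.

(* Vertices are pairs (column, clock); a graph with [ncols] columns only has
   edges between vertices of columns 0 .. ncols-1 (see [edges]). *)
Section Graphs.
Variable X : finType.

Definition vertex := (nat * X)%type.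

Record tgraph := TGraph {
  ncols : nat;
  tedge : vertex -> vertex -> weight -> Prop }.

Definition edges (G : tgraph) (u v : vertex) (e : weight) : Prop :=
  (u.1 < ncols G)%N /\ (v.1 < ncols G)%N /\ tedge G u v e.

Inductive gpath (G : tgraph) : vertex -> vertex -> weight -> Prop :=
| gp_nil u : gpath G u u w0
| gp_cons u v w e p : edges G u v e -> gpath G v w p -> gpath G u w (addw e p).

(* a cycle = a nonempty path from a vertex to itself *)
Definition no_neg_cycle (G : tgraph) : Prop :=
  forall u v e p, edges G u v e -> gpath G v u p -> ~ negw (addw e p).

Definition minpath (G : tgraph) (u v : vertex) (m : weight) : Prop :=
  gpath G u v m /\ forall p, gpath G u v p -> lew m p.

Definition tcomp (G1 G2 : tgraph) : tgraph :=
  TGraph (ncols G1 + ncols G2)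
    (fun u v e =>
       edges G1 u v e
       \/ (exists u' v', u = (u'.1 + ncols G1, u'.2) /\ v = (v'.1 + ncols G1, v'.2)
                         /\ edges G2 u' v' e)
       \/ (u.2 = v.2 /\ e = w0 /\
           ((u.1 = (ncols G1).-1 /\ v.1 = ncols G1) \/
            (u.1 = ncols G1 /\ v.1 = (ncols G1).-1)))).

Fixpoint tpow (H : tgraph) (m : nat) : tgraph :=
  match m with
  | 0 => TGraph 0 (fun _ _ _ => False)
  | S m' => match m' with
            | 0 => H
            | _ => tcomp (tpow H m') H
            end
  end.

(* |G| : canonical form of G restricted to first and last columns, renumbered 0,1.
   Column c ∈ {0,1} of |G| corresponds to column 0 (c = 0) or ncols G - 1 (c = 1) of G;
   canonical edges only join distinct vertices and carry the minimal path weight. *)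
Definition colof (G : tgraph) (c : nat) : nat := if c == 0 then 0 else (ncols G).-1.

Definition absG (G : tgraph) : tgraph :=
  TGraph 2 (fun u v e =>
    (colof G u.1, u.2) <> (colof G v.1, v.2) /\
    minpath G (colof G u.1, u.2) (colof G v.1, v.2) e).

(* PTop : leaf labelled ⊤;  PLeaf x y : node labelled (x,y) without children;
   PNode1 x y e t : node (x,y) with a single child t, edge weight e;
   PNode2 x y e1 t1 e2 t2 : node (x,y) with two children. *)
Inductive ptree :=
| PTop
| PLeaf (x y : X)
| PNode1 (x y : X) (e : weight) (t : ptree)
| PNode2 (x y : X) (e1 : weight) (t1 : ptree) (e2 : weight) (t2 : ptree).

Definition ptlabel (t : ptree) : option (X * X) :=
  match t with
  | PTop => None
  | PLeaf x y | PNode1 x y _ _ | PNode2 x y _ _ _ _ => Some (x, y)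
  end.

Fixpoint is_ptree (H : tgraph) (t : ptree) : Prop :=
  match t with
  | PTop => True
  | PLeaf _ _ => True
  | PNode1 x y e t' =>
      is_ptree H t' /\
      ((t' = PTop /\ exists c, (c <= 1)%N /\ edges H (c, x) (c, y) e)
       \/ (exists u v c c' e1 e2, ptlabel t' = Some (u, v) /\ (c <= 1)%N /\ (c' <= 1)%N
             /\ c <> c' /\ edges H (c, x) (c', u) e1 /\ edges H (c', v) (c, y) e2
             /\ e = addw e1 e2))
  | PNode2 x y e1 t1 e2 t2 =>
      is_ptree H t1 /\ is_ptree H t2 /\ e1 = w0 /\ e2 = w0 /\
      exists z, ptlabel t1 = Some (x, z) /\ ptlabel t2 = Some (z, y)
  end.

Fixpoint ptweight (t : ptree) : weight :=
  match t with
  | PTop | PLeaf _ _ => w0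
  | PNode1 _ _ e t' => addw e (ptweight t')
  | PNode2 _ _ e1 t1 e2 t2 => addw (addw e1 (ptweight t1)) (addw e2 (ptweight t2))
  end.

Fixpoint ptheight (t : ptree) : nat :=
  match t with
  | PTop | PLeaf _ _ => 0
  | PNode1 _ _ _ t' => (ptheight t').+1
  | PNode2 _ _ _ t1 _ t2 => (maxn (ptheight t1) (ptheight t2)).+1
  end.

Fixpoint complete (t : ptree) : Prop :=
  match t with
  | PTop => True
  | PLeaf _ _ => False
  | PNode1 _ _ _ t' => complete t'
  | PNode2 _ _ _ t1 _ t2 => complete t1 /\ complete t2
  end.

End Graphs.

From Stdlib Require Import ZArith Lia.
From mathcomp Require Import all_boot zify.
Set Implicit Arguments. Unset Strict Implicit. Unset Printing Implicit Defensive.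

(* In the composition of n copies of a two-column graph H, copy l occupies
   columns 2l and 2l+1, and the pivot column 2l+1 is glued by (<=,0)-edges to
   the first column of copy l+1.  Each p-tree node (x,y) is realised as a path
   from (2l+1,x) back to (2l+1,y) for a pivot l: a leaf child uses an H-edge in
   copy l or l+1, a single child (u,v) moves one pivot to the right or to the
   left along the two H-edges and recurses there, and two children are
   concatenated at the same pivot.  A tree of height at most k started at pivot
   k-1 never leaves the 2k copies. *)

Lemma addw0l (p : weight) : addw w0 p = p.
Proof. by case: p. Qed.

Lemma addw0r (p : weight) : addw p w0 = p.
Proof. by case: p => [[] d]; rewrite /addw /= Z.add_0_r. Qed.

Lemma addwC (p q : weight) : addw p q = addw q p.
Proof. by rewrite /addw orbC Z.add_comm. Qed.

Lemma addwA (p q r : weight) : addw p (addw q r) = addw (addw p q) r.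
Proof. by rewrite /addw /= orbA Z.add_assoc. Qed.

Lemma lew_refl (p : weight) : lew p p.
Proof. by right; split => //; case: (wstrict p); [left | right]. Qed.

Section Paths.
Variables (X : finType) (G : tgraph X).

Lemma gpath_cat (u v w : vertex X) (p q : weight) :
  gpath G u v p -> gpath G v w q -> gpath G u w (addw p q).
Proof.
elim=> [u0 | u0 v0 w0' e p0 E _ IH] Pq; first by rewrite addw0l.
by rewrite -addwA; apply: gp_cons E (IH Pq).
Qed.

Lemma gpath_edge (u v : vertex X) (e : weight) : edges G u v e -> gpath G u v e.
Proof. by move=> E; rewrite -[e]addw0r; apply: gp_cons E (gp_nil _ _). Qed.

Lemma edges_tcomp_l (G2 : tgraph X) (u v : vertex X) (e : weight) :
  edges G u v e -> edges (tcomp G G2) u v e.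
Proof. by move=> [Hu [Hv E]]; split; [|split]; rewrite /= ?ltn_addr //; left. Qed.

Lemma edges_tcomp_r (G1 : tgraph X) (i j : nat) (x y : X) (e : weight) :
  edges G (i, x) (j, y) e -> edges (tcomp G1 G) (i + ncols G1, x) (j + ncols G1, y) e.
Proof.
move=> E; have [Hi [Hj _]] := E; rewrite /= in Hi Hj.
split; rewrite /=; [lia | split; [lia | right; left]].
by exists (i, x), (j, y).
Qed.

Lemma edges_tcomp_glue (G2 : tgraph X) (x : X) : (0 < ncols G2)%N ->
  edges (tcomp G G2) ((ncols G).-1, x) (ncols G, x) w0
  /\ edges (tcomp G G2) (ncols G, x) ((ncols G).-1, x) w0.
Proof.
move=> HG2; split; (split; [|split]); rewrite /=; try lia; right; right;
  by split; [|split]; [| |left + right].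
Qed.

End Paths.

Section Powers.
Variables (X : finType) (H : tgraph X).
Hypothesis ncolsH : ncols H = 2.

Lemma tpowSS (n : nat) : tpow H n.+2 = tcomp (tpow H n.+1) H.
Proof. by []. Qed.

Lemma ncols_tpow (n : nat) : ncols (tpow H n.+1) = 2 * n.+1.
Proof. by elim: n => [|n IH]; rewrite ?tpowSS /= ?IH ncolsH //; lia. Qed.

Lemma edge_tpow (n l a b : nat) (x y : X) (e : weight) :
  (l <= n)%N -> edges H (a, x) (b, y) e ->
  edges (tpow H n.+1) (2 * l + a, x) (2 * l + b, y) e.
Proof.
elim: n l => [|n IH] l Hl E; first by have -> : l = 0 by lia.
rewrite tpowSS; case: (ltnP l n.+1) => [lt_ln | ge_ln].
  exact/edges_tcomp_l/IH.
have := edges_tcomp_r (tpow H n.+1) E; rewrite ncols_tpow /=.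
have -> : (2 * l = 2 * n.+1)%N by lia.
by rewrite ![(_ + 2 * _)%N]addnC.
Qed.

Lemma glue_tpow (n l : nat) (x : X) : (l < n)%N ->
  edges (tpow H n.+1) (2 * l + 1, x) (2 * l + 2, x) w0
  /\ edges (tpow H n.+1) (2 * l + 2, x) (2 * l + 1, x) w0.
Proof.
elim: n l => [|n IH] l Hl; first by [].
rewrite tpowSS; case: (ltnP l n) => [lt_ln | ge_ln].
  by have [E1 E2] := IH l lt_ln; split; apply: edges_tcomp_l.
have := edges_tcomp_glue (tpow H n.+1) x (ltac:(lia) : (0 < ncols H)%N).
rewrite ncols_tpow.
have -> : (2 * l + 1 = (2 * n.+1).-1)%N by lia.
by have -> : (2 * l + 2 = 2 * n.+1)%N by lia.
Qed.

Definition pivot (l : nat) : nat := 2 * l + 1.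

(* Column c of copy j is either the pivot j (c = 1) or glued to the pivot j-1 (c = 0). *)
Lemma pivot_links (n j l c : nat) (x : X) :
  (c <= 1)%N -> (j <= n)%N -> l.+1 = (j + c)%N ->
  gpath (tpow H n.+1) (pivot l, x) (2 * j + c, x) w0
  /\ gpath (tpow H n.+1) (2 * j + c, x) (pivot l, x) w0.
Proof.
rewrite /pivot; case: c => [|[|//]] _ Hj Hl.
  have [E1 E2] := glue_tpow (n := n) (l := l) x ltac:(lia).
  have -> : (2 * j + 0 = 2 * l + 2)%N by lia.
  by split; apply: gpath_edge.
have -> : (2 * j + 1 = 2 * l + 1)%N by lia.
by split; apply: gp_nil.
Qed.

Lemma edge_pivots (n j l l' c c' : nat) (x y : X) (e : weight) :
  (c <= 1)%N -> (c' <= 1)%N -> (j <= n)%N -> l.+1 = (j + c)%N -> l'.+1 = (j + c')%N ->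
  edges H (c, x) (c', y) e -> gpath (tpow H n.+1) (pivot l, x) (pivot l', y) e.
Proof.
move=> Hc Hc' Hj Hl Hl' E.
have [P _] := pivot_links x Hc Hj Hl.
have [_ Q] := pivot_links y Hc' Hj Hl'.
rewrite -[e]addw0l -[e]addw0r.
exact: gpath_cat P (gpath_cat (gpath_edge (edge_tpow Hj E)) Q).
Qed.

Lemma complete_ptheight_gt0 (t : ptree X) (x y : X) :
  complete t -> ptlabel t = Some (x, y) -> (0 < ptheight t)%N.
Proof. by case: t. Qed.

Lemma ptree_pivot_path (t : ptree X) :
  is_ptree H t -> complete t -> forall (x y : X) (n l : nat),
  ptlabel t = Some (x, y) -> (ptheight t <= l.+1)%N -> (l + ptheight t <= n)%N ->
  gpath (tpow H n.+1) (pivot l, x) (pivot l, y) (ptweight t).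
Proof.
elim: t => [|x0 y0|x0 y0 e t IH|x0 y0 e1 t1 IH1 e2 t2 IH2] //.
- move=> [Ht Hchild] Ct x y n l [<- <-] /= Hh1 Hh2; rewrite /= in Ht Ct.
  case: Hchild => [[-> [c [Hc E]]] | [u [v [c [c' [f1 [f2 [Lt [Hc [Hc' [Hcc' [E1 [E2 ->]]]]]]]]]]]]].
    rewrite [ptweight _]/= addw0r.
    by apply: (edge_pivots (j := l.+1 - c) Hc Hc _ _ _ E); lia.
  have ht_gt0 := complete_ptheight_gt0 Ct Lt.
  have P := IH Ht Ct u v n (l.+1 - c + c').-1 Lt ltac:(lia) ltac:(lia).
  rewrite [ptweight _]/= -addwA [addw f2 _]addwC addwA.
  apply: gpath_cat (gpath_cat _ P) _.
  - by apply: (edge_pivots (j := l.+1 - c) Hc Hc' _ _ _ E1); lia.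
  - by apply: (edge_pivots (j := l.+1 - c) Hc' Hc _ _ _ E2); lia.
- move=> [Ht1 [Ht2 [-> [-> [z [L1 L2]]]]]] [C1 C2] x y n l [<- <-] /= Hh1 Hh2.
  rewrite [ptweight _]/= !addw0l.
  by apply: gpath_cat (IH1 Ht1 C1 x0 z n l L1 _ _) (IH2 Ht2 C2 z y0 n l L2 _ _); lia.
Qed.

End Powers.

Theorem mainTheorem14 (X : finType) (G : tgraph X) (k : nat) (x y : X)
    (t : ptree X) (w : weight) :
  (0 < ncols G)%N ->
  no_neg_cycle G ->
  (1 <= k)%N ->
  is_ptree (absG G) t -> complete t ->
  ptlabel t = Some (x, y) -> ptweight t = w -> (ptheight t <= k)%N ->
  (exists p, gpath (tpow (absG G) (2 * k)) ((2 * k).-1, x) ((2 * k).-1, y) p /\ lew p w)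
  /\ (forall m, minpath (tpow (absG G) (2 * k)) ((2 * k).-1, x) ((2 * k).-1, y) m -> lew m w).
Proof.
move=> _ _ Hk Ht Ct Lt <- Hh.
case: k Hk Hh => [|k] // _ Hh.
have -> : (2 * k.+1 = (2 * k + 1).+1)%N by lia.
have Pt : gpath (tpow (absG G) (2 * k + 1).+1) (pivot k, x) (pivot k, y) (ptweight t).
  by apply: (ptree_pivot_path (erefl : ncols (absG G) = 2) Ht Ct Lt); lia.
split; first by exists (ptweight t); split; [exact: Pt | exact: lew_refl].
by move=> m [_ min_m]; exact: min_m.
Qed.
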